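(* Let $n\ge2$, $\rho\ge0$, $\xi_n=\frac{n+1}{n-1}$, and let $\lambda_0,\dots,\lambda_{n-1}$ be the eigenvalues of $K_n(\rho)$ labeled as described in the context. Then $K_n(\rho)$ has exactly two extraordinary eigenvalues ($\lambda_0$ and $\lambda_1$) when $\rho>\xi_n$, exactly one ($\lambda_0$) when $1<\rho\le\xi_n$, and none when $0\le\rho\le1$. Furthermore: when $\rho=0$: $\lambda_{n-1}=\dots=\lambda_1=\lambda_0=1$; when $0<\rho<1$: $0<\frac{1-\rho}{1+\rho}<\lambda_{n-1}<\lambda_{n-2}<\dots<\lambda_1<\lambda_0<\frac{1+\rho}{1-\rho}$; when $\rho=1$: $\lambda_1=\dots=\lambda_{n-1}=0<\lambda_0=n$; when $1<\rho<\xi_n$: $-\frac{\rho+1}{\rho-1}<\lambda_1<\lambda_2<\dots<\lambda_{n-1}<-\frac{\rho-1}{\rho+1}<0<n<\lambda_0$; when $\rho=\xi_n$: $-n=\lambda_1<\lambda_2<\dots<\lambda_{n-1}<-\frac1n<0<n<\lambda_0$; when $\rho>\xi_n$: $\lambda_1<-n<-\frac{\rho+1}{\rho-1}<\lambda_2<\dots<\lambda_{n-1}<-\frac{\rho-1}{\rho+1}<0<n<\lambda_0$.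
   Context: $K_n(\rho)=\left[\rho^{|j-k|}\right]_{j,k=1}^n$ (with $\rho^0=1$). Ordinary/extraordinary: with $\sigma(\rho,\theta)=\frac{1-\rho^2}{1-2\rho\cos\theta+\rho^2}$ and $\mathrm{range}\{\sigma(\rho,\theta)\}=\{\sigma(\rho,\theta):\theta\in(-\pi,\pi]\}$, for real $\rho\notin\{\pm1\}$ an eigenvalue is ordinary if it lies in $\mathrm{range}\{\sigma(\rho,\theta)\}$; for $\rho\in\{0,\pm1\}$ all eigenvalues are ordinary; extraordinary means not ordinary. Labeling: $\lambda_k=\frac{1-\rho^2}{1-2\rho\cos\mu_k+\rho^2}=(-1)^k\frac{\sin n\mu_k}{\sin\mu_k}$ (indeterminate forms read as limits), where, with $c_n^{(t)}(\mu)=\frac{\cos\frac{\mu(n+1)}{2}}{\cos\frac{\mu(n-1)}{2}}$, $s_n^{(t)}(\mu)=\frac{\sin\frac{\mu(n+1)}{2}}{\sin\frac{\mu(n-1)}{2}}$, $c_n^{(h)}(x)=c_n^{(t)}(ix)$, $s_n^{(h)}(x)=s_n^{(t)}(ix)$ (extended continuously at $0$), $\alpha_k=\frac{(k-1)\pi}{n-1}$, $\beta_k=\frac{k\pi}{n}$, $\gamma_k=\frac{(k+1)\pi}{n+1}$: $\mu_0=ix_0$ with $x_0$ the unique root of $c_n^{(h)}(x)=\rho$ in $[0,\infty)$ if $\rho\ge1$, and the unique root of $c_n^{(t)}(\mu)=\rho$ in $[0,\gamma_0]$ if $0\le\rho\le1$; $\mu_1=ix_1$ with $x_1$ the unique root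 of $s_n^{(h)}(x)=\rho$ in $[0,\infty)$ if $\rho\ge\xi_n$, the unique root of $s_n^{(t)}(\mu)=\rho$ in $[0,\beta_1]$ if $1\le\rho\le\xi_n$, and in $[\beta_1,\gamma_1]$ if $0\le\rho\le1$; for even $k\ge2$ ($k\le n-1$), $\mu_k$ is the unique root of $c_n^{(t)}(\mu)=\rho$ in $(\alpha_k,\beta_k]$ if $\rho\ge1$ and in $[\beta_k,\gamma_k]$ if $0\le\rho\le1$; for odd $k\ge3$ ($k\le n-1$), the same with $s_n^{(t)}$ in place of $c_n^{(t)}$. *)

From Stdlib Require Import Reals.
From mathcomp Require Import all_boot all_algebra.
From mathcomp Require Import Rstruct.

Set Implicit Arguments.
Unset Strict Implicit.
Unset Printing Implicit Defensive.

Local Open Scope R_scope.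

(* The Kac-Murdock-Szego matrix K_n(rho) = [rho^|j-k|], with rho^0 = 1. *)
Definition distn (i j : nat) : nat := if (i <= j)%N then (j - i)%N else (i - j)%N.

Definition Kmat (n : nat) (rho : R) : 'M[R]_n :=
  \matrix_(i < n, j < n) pow rho (distn i j).

Definition sigma (rho theta : R) : R :=
  (1 - rho ^ 2) / (1 - 2 * rho * cos theta + rho ^ 2).

Definition in_sigma_range (rho lam : R) : Prop :=
  exists theta, - PI < theta <= PI /\ lam = sigma rho theta.

Definition ordinary (rho lam : R) : Prop :=
  rho = 0 \/ rho = 1 \/ rho = -1 \/ in_sigma_range rho lam.

Definition extraordinary (rho lam : R) : Prop := ~ ordinary rho lam.

Definition xi (n : nat) : R := (INR n + 1) / (INR n - 1).
Definition alpha (n k : nat) : R := (INR k - 1) * PI / (INR n - 1).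
Definition beta (n k : nat) : R := INR k * PI / INR n.
Definition gamma (n k : nat) : R := (INR k + 1) * PI / (INR n + 1).

Definition ct (n : nat) (mu : R) : R :=
  cos (mu * (INR n + 1) / 2) / cos (mu * (INR n - 1) / 2).
Definition st (n : nat) (mu : R) : R :=
  if Req_EM_T mu 0 then (INR n + 1) / (INR n - 1)
  else sin (mu * (INR n + 1) / 2) / sin (mu * (INR n - 1) / 2).
(* c_n^(h)(x) = c_n^(t)(ix), s_n^(h)(x) = s_n^(t)(ix) (extended at 0) *)
Definition ch (n : nat) (x : R) : R :=
  cosh (x * (INR n + 1) / 2) / cosh (x * (INR n - 1) / 2).
Definition sh (n : nat) (x : R) : R :=
  if Req_EM_T x 0 then (INR n + 1) / (INR n - 1)
  else sinh (x * (INR n + 1) / 2) / sinh (x * (INR n - 1) / 2).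

(* sin(n mu)/sin(mu), indeterminate forms read as limits *)
Definition Dt (n : nat) (mu : R) : R :=
  if Req_EM_T (sin mu) 0 then INR n * cos (INR n * mu) / cos mu
  else sin (INR n * mu) / sin mu.
(* sin(n i x)/sin(i x) = sinh(n x)/sinh(x), limit n at x = 0 *)
Definition Dh (n : nat) (x : R) : R :=
  if Req_EM_T x 0 then INR n else sinh (INR n * x) / sinh x.

Definition unique_root (f : R -> R) (rho : R) (I : R -> Prop) (mu : R) : Prop :=
  I mu /\ f mu = rho /\ (forall nu, I nu -> f nu = rho -> nu = mu).

(* lam is the eigenvalue lambda_k of K_n(rho) under the labeling of the paper:
   lambda_k = (-1)^k sin(n mu_k)/sin(mu_k) with mu_k as described
   (mu_k = i x_k in the hyperbolic cases). *)
Definition labeled (n : nat) (rho : R) (k : nat) (lam : R) : Prop :=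
  if (k == 0)%N then
    (1 <= rho -> exists x, unique_root (ch n) rho (fun y => 0 <= y) x /\ lam = Dh n x) /\
    (0 <= rho <= 1 -> exists mu,
        unique_root (ct n) rho (fun m => 0 <= m <= gamma n 0) mu /\ lam = Dt n mu)
  else if (k == 1)%N then
    (xi n <= rho -> exists x, unique_root (sh n) rho (fun y => 0 <= y) x /\ lam = - Dh n x) /\
    (1 <= rho <= xi n -> exists mu,
        unique_root (st n) rho (fun m => 0 <= m <= beta n 1) mu /\ lam = - Dt n mu) /\
    (0 <= rho <= 1 -> exists mu,
        unique_root (st n) rho (fun m => beta n 1 <= m <= gamma n 1) mu /\ lam = - Dt n mu)
  else
    let f := if odd k then st n else ct n in
    (1 <= rho -> exists mu,
        unique_root f rho (fun m => alpha n k < m <= beta n k) mu /\ lam = (-1) ^ k * Dt n mu) /\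
    (0 <= rho <= 1 -> exists mu,
        unique_root f rho (fun m => beta n k <= m <= gamma n k) mu /\ lam = (-1) ^ k * Dt n mu).

From Stdlib Require Import Reals Lra.
From Coquelicot Require Import Rcomplements.
From mathcomp Require Import all_boot all_algebra Rstruct.
From Pilot Require Import Defs. (* last, so that [Defs.sigma] shadows [Rsigma.sigma] *)

(** The labeling equation [c_n(mu) = rho] (resp. [s_n(mu) = rho]) is what
    turns [(-1)^k sin(n mu) / sin mu] into [sigma(rho, mu)]: for
    [a = mu (n+1)/2] and [b = mu (n-1)/2] one has
    [sigma(cos a / cos b, a - b) = sin(a+b) / sin(a-b)] and
    [sigma(sin a / sin b, a - b) = - sin(a+b) / sin(a-b)].  So every
    trigonometric eigenvalue is [sigma(rho, mu_k)] with [mu_k] in [[0, pi)].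
    Since [sigma(rho, .)] is strictly decreasing on [[0, pi]] for [rho < 1]
    and strictly increasing for [rho > 1], and the intervals containing the
    [mu_k] increase with [k], this gives the orderings; the values at [0] and
    [pi] give the bounds.  The hyperbolic eigenvalues are [+- sinh(n x)/sinh x],
    of modulus greater than [n], whereas for [rho > 1] every value of
    [sigma(rho, .)] lies in [[-(rho+1)/(rho-1), 0)]; hence they are
    extraordinary.  For [rho = 0] the matrix is the identity. *)

Set Implicit Arguments.
Unset Strict Implicit.
Unset Printing Implicit Defensive.

Local Open Scope R_scope.

Lemma INR_leq m p : (m <= p)%N -> INR m <= INR p.
Proof. by move/leP/le_INR. Qed.

Lemma INR_ge1 k : (1 <= k)%N -> 1 <= INR k.
Proof. exact: INR_leq. Qed.

Lemma INR_ge2 k : (2 <= k)%N -> 2 <= INR k.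
Proof. by move/INR_leq => /=; lra. Qed.

Lemma Rdiv_lt_Rdiv a b c d : 0 < b -> 0 < d -> a * d < c * b -> a / b < c / d.
Proof.
move=> b_gt0 d_gt0 h; apply/Rlt_div_l => //.
by rewrite (_ : c / d * b = c * b / d); [apply/Rlt_div_r | field; lra].
Qed.

Lemma Rdiv_pos_lt c d1 d2 : 0 < c -> 0 < d1 -> d1 < d2 -> c / d2 < c / d1.
Proof.
by move=> *; apply: Rmult_lt_compat_l => //; apply: Rinv_lt_contravar; nra.
Qed.

Lemma Rdiv_neg_lt c d1 d2 : c < 0 -> 0 < d1 -> d1 < d2 -> c / d1 < c / d2.
Proof.
move=> c_lt0 d1_gt0 d12; have := Rdiv_pos_lt (Ropp_0_gt_lt_contravar _ c_lt0) d1_gt0 d12.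
by rewrite /Rdiv !Ropp_mult_distr_l_reverse; lra.
Qed.

Lemma Rpow_opp1 k : (-1) ^ k = if odd k then -1 else 1.
Proof. by elim: k => //= k ->; case: (odd k) => /=; lra. Qed.

Section Angles.

Variable n : nat.
Hypothesis n_ge2 : (2 <= n)%N.

Let INR_n_ge2 : 2 <= INR n := INR_ge2 n_ge2.

Lemma beta_gt0 k : (1 <= k)%N -> 0 < beta n k.
Proof.
move/INR_ge1=> k_ge1; have := PI_RGT_0.
by rewrite /beta => *; apply: Rdiv_lt_0_compat; nra.
Qed.

Lemma alpha_gt0 k : (2 <= k)%N -> 0 < alpha n k.
Proof.
move/INR_ge2=> k_ge2; have := PI_RGT_0.
by rewrite /alpha => *; apply: Rdiv_lt_0_compat; nra.
Qed.

Lemma beta_lt_PI k : (k < n)%N -> beta n k < PI.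
Proof.
move/INR_leq; rewrite S_INR => k_lt_n; have := PI_RGT_0.
by rewrite /beta => *; apply/Rlt_div_l; nra.
Qed.

Lemma gamma_lt_PI k : (k < n)%N -> gamma n k < PI.
Proof.
move/INR_leq; rewrite S_INR => k_lt_n; have := PI_RGT_0.
by rewrite /gamma => *; apply/Rlt_div_l; nra.
Qed.

Lemma gamma_lt_beta_succ k : gamma n k < beta n k.+1.
Proof.
have := pos_INR k; have := PI_RGT_0.
by rewrite /gamma /beta S_INR => *; apply: Rdiv_lt_Rdiv; nra.
Qed.

Lemma beta_lt_alpha_succ k : (1 <= k)%N -> beta n k < alpha n k.+1.
Proof.
move/INR_ge1=> k_ge1; have := PI_RGT_0.
rewrite /alpha /beta S_INR (_ : INR k + 1 - 1 = INR k); last by ring.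
by move=> *; apply: Rdiv_lt_Rdiv; nra.
Qed.

Lemma xi_gt1 : 1 < xi n.
Proof. by apply/Rlt_div_r; lra. Qed.

End Angles.

Definition sigma_den (rho th : R) : R := 1 - 2 * rho * cos th + rho ^ 2.

Lemma sigmaE rho th : sigma rho th = (1 - rho ^ 2) / sigma_den rho th.
Proof. by []. Qed.

Lemma sigma_den_ge rho th : 0 <= rho -> (rho - 1) ^ 2 <= sigma_den rho th.
Proof. by have := COS_bound th; rewrite /sigma_den => *; nra. Qed.

Lemma sigma_den_lt rho t1 t2 :
  0 < rho -> 0 <= t1 -> t1 < t2 -> t2 <= PI -> sigma_den rho t1 < sigma_den rho t2.
Proof.
move=> rho_gt0 *; have : cos t2 < cos t1 by apply: cos_decreasing_1; lra.
by rewrite /sigma_den; nra.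
Qed.

Lemma sigma_decreasing rho t1 t2 :
  0 < rho < 1 -> 0 <= t1 -> t1 < t2 -> t2 <= PI -> sigma rho t2 < sigma rho t1.
Proof.
move=> rho_bds *; have := sigma_den_ge t1 (Rlt_le _ _ (proj1 rho_bds)).
by rewrite !sigmaE => *; apply: Rdiv_pos_lt; [nra | nra | apply: sigma_den_lt; lra].
Qed.

Lemma sigma_increasing rho t1 t2 :
  1 < rho -> 0 <= t1 -> t1 < t2 -> t2 <= PI -> sigma rho t1 < sigma rho t2.
Proof.
move=> rho_gt1 *; have := @sigma_den_ge rho t1 ltac:(lra).
by rewrite !sigmaE => *; apply: Rdiv_neg_lt; [nra | nra | apply: sigma_den_lt; lra].
Qed.

Lemma sigma_0 rho : rho <> 1 -> sigma rho 0 = - ((rho + 1) / (rho - 1)).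
Proof.
move=> rho_neq1; rewrite sigmaE /sigma_den cos_0.
by rewrite (_ : 1 - 2 * rho * 1 + rho ^ 2 = (rho - 1) ^ 2); [field; lra | ring].
Qed.

Lemma sigma_PI rho : rho <> -1 -> sigma rho PI = - ((rho - 1) / (rho + 1)).
Proof.
move=> rho_neqN1; rewrite sigmaE /sigma_den cos_PI.
by rewrite (_ : 1 - 2 * rho * -1 + rho ^ 2 = (rho + 1) ^ 2); [field; lra | ring].
Qed.

Lemma sigma_range_gt1 rho th : 1 < rho -> sigma rho 0 <= sigma rho th < 0.
Proof.
move=> rho_gt1; have := @sigma_den_ge rho th ltac:(lra).
rewrite !sigmaE (_ : sigma_den rho 0 = (rho - 1) ^ 2); last by rewrite /sigma_den cos_0; ring.
move=> /Rle_lt_or_eq_dec [den_gt|<-]; split; try (apply: Rdiv_neg_pos; nra).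
- by left; apply: Rdiv_neg_lt => //; nra.
- exact: Rle_refl.
Qed.

Lemma ordinary_sigma rho mu : - PI < mu <= PI -> ordinary rho (sigma rho mu).
Proof. by move=> mu_bds; right; right; right; exists mu. Qed.

Lemma ordinary_gt1 rho l : 1 < rho -> ordinary rho l -> sigma rho 0 <= l < 0.
Proof.
move=> rho_gt1 [|[|[|[th [_ ->]]]]]; try lra.
exact: sigma_range_gt1.
Qed.

Lemma sigma_cos_ratio a b : cos b <> 0 -> sin (a - b) <> 0 ->
  sigma (cos a / cos b) (a - b) = sin (a + b) / sin (a - b).
Proof.
move=> cb_neq0 sab_neq0; have := sin2_cos2 a; have := sin2_cos2 b; rewrite /Rsqr => *.
have num : sin (a + b) * sin (a - b) = cos b ^ 2 - cos a ^ 2.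
  by rewrite sin_plus sin_minus; nra.
have den : sin (a - b) ^ 2 = cos b ^ 2 - 2 * cos a * cos b * cos (a - b) + cos a ^ 2.
  by rewrite sin_minus cos_minus; nra.
rewrite sigmaE /sigma_den.
rewrite (_ : 1 - (cos a / cos b) ^ 2 = sin (a + b) * sin (a - b) / cos b ^ 2);
  last by rewrite num; field.
rewrite (_ : 1 - 2 * (cos a / cos b) * cos (a - b) + (cos a / cos b) ^ 2
           = sin (a - b) ^ 2 / cos b ^ 2); last by rewrite den; field.
by field.
Qed.

Lemma sigma_sin_ratio a b : sin b <> 0 -> sin (a - b) <> 0 ->
  sigma (sin a / sin b) (a - b) = - (sin (a + b) / sin (a - b)).
Proof.
move=> sb_neq0 sab_neq0; have := sin2_cos2 a; have := sin2_cos2 b; rewrite /Rsqr => *.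
have num : sin (a + b) * sin (a - b) = sin a ^ 2 - sin b ^ 2.
  by rewrite sin_plus sin_minus; nra.
have den : sin (a - b) ^ 2 = sin b ^ 2 - 2 * sin a * sin b * cos (a - b) + sin a ^ 2.
  by rewrite sin_minus cos_minus; nra.
rewrite sigmaE /sigma_den.
rewrite (_ : 1 - (sin a / sin b) ^ 2 = - (sin (a + b) * sin (a - b)) / sin b ^ 2);
  last by rewrite num; field.
rewrite (_ : 1 - 2 * (sin a / sin b) * cos (a - b) + (sin a / sin b) ^ 2
           = sin (a - b) ^ 2 / sin b ^ 2); last by rewrite den; field.
by field.
Qed.

Lemma Dt_sin n mu : sin mu <> 0 -> Dt n mu = sin (INR n * mu) / sin mu.
Proof. by rewrite /Dt; case: (Req_EM_T (sin mu) 0). Qed.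

Lemma st_sin n mu : mu <> 0 ->
  st n mu = sin (mu * (INR n + 1) / 2) / sin (mu * (INR n - 1) / 2).
Proof. by rewrite /st; case: (Req_EM_T mu 0). Qed.

(** [rho <> 0] rules out the junk value [x / 0 = 0] of [ct] and [st]. *)
Lemma Dt_sigma n k rho mu : rho <> 0 -> 0 < mu < PI ->
  (if odd k then st n else ct n) mu = rho -> (-1) ^ k * Dt n mu = sigma rho mu.
Proof.
move=> rho_neq0 mu_bds root_mu.
have sin_mu : sin mu <> 0 by have := sin_gt_0 _ (proj1 mu_bds) (proj2 mu_bds); lra.
rewrite Dt_sin // Rpow_opp1; move: root_mu.
set a := mu * (INR n + 1) / 2; set b := mu * (INR n - 1) / 2.
have amb : a - b = mu by rewrite /a /b; field.
have apb : a + b = INR n * mu by rewrite /a /b; field.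
have sab : sin (a - b) <> 0 by rewrite amb.
case: (odd k); [rewrite st_sin -/a -/b; last lra | rewrite /ct -/a -/b] => root_mu.
- have sb : sin b <> 0 by move=> sb0; apply: rho_neq0; rewrite -root_mu sb0 /Rdiv Rinv_0; ring.
  by have := sigma_sin_ratio sb sab; rewrite amb apb root_mu => ->; ring.
- have cb : cos b <> 0 by move=> cb0; apply: rho_neq0; rewrite -root_mu cb0 /Rdiv Rinv_0; ring.
  by have := sigma_cos_ratio cb sab; rewrite amb apb root_mu => ->; ring.
Qed.

Lemma ct_0 n : ct n 0 = 1.
Proof. by rewrite /ct !Rmult_0_l /Rdiv Rmult_0_l cos_0; field. Qed.

Lemma st_0 n : st n 0 = xi n.
Proof. by rewrite /st; case: (Req_EM_T 0 0). Qed.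

Lemma ch_0 n : ch n 0 = 1.
Proof. by rewrite /ch !Rmult_0_l /Rdiv Rmult_0_l cosh_0; field. Qed.

Lemma sh_0 n : sh n 0 = xi n.
Proof. by rewrite /sh; case: (Req_EM_T 0 0). Qed.

Lemma Dt_0 n : Dt n 0 = INR n.
Proof. by rewrite /Dt sin_0; case: (Req_EM_T 0 0) => //= _; rewrite Rmult_0_r cos_0; field. Qed.

Lemma Dh_0 n : Dh n 0 = INR n.
Proof. by rewrite /Dh; case: (Req_EM_T 0 0). Qed.

Lemma sigma_xi_0 n : (2 <= n)%N -> sigma (xi n) 0 = - INR n.
Proof.
move=> n_ge2; have := INR_ge2 n_ge2; have := xi_gt1 n_ge2 => *.
by rewrite sigma_0 /xi; [field; split | rewrite -/(xi n)]; lra.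
Qed.

Lemma opp_INR_lt_sigma_0 n rho : (2 <= n)%N -> xi n < rho -> - INR n < sigma rho 0.
Proof.
move=> n_ge2; have := INR_ge2 n_ge2; have := xi_gt1 n_ge2 => *.
have : INR n + 1 < rho * (INR n - 1) by apply/Rlt_div_l => //; lra.
rewrite sigma_0; last lra.
by move=> *; apply: Ropp_lt_contravar; apply/Rlt_div_l; lra.
Qed.

Lemma sinh_gt0 x : 0 < x -> 0 < sinh x.
Proof. by move=> x_gt0; rewrite -sinh_0; apply: sinh_lt. Qed.

Lemma sinh_add x y : sinh (x + y) = sinh x * cosh y + cosh x * sinh y.
Proof. by rewrite /sinh /cosh Ropp_plus_distr !exp_plus; field. Qed.

Lemma cosh_gt1 x : 0 < x -> 1 < cosh x.
Proof.
move=> x_gt0; have := exp_increasing 0 x x_gt0; rewrite /cosh exp_Ropp exp_0 => ex_gt1.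
have : 0 < (exp x - 1) ^ 2 / (2 * exp x) by apply: Rdiv_lt_0_compat; nra.
by rewrite (_ : (exp x - 1) ^ 2 / (2 * exp x) = (exp x + / exp x) / 2 - 1);
  [lra | field; lra].
Qed.

Lemma cosh_ge1 x : 0 <= x -> 1 <= cosh x.
Proof. by case/Rle_lt_or_eq_dec => [/cosh_gt1 | <-]; [lra | rewrite cosh_0; lra]. Qed.

Lemma sinh_mul_succ_gt m x : (1 <= m)%N -> 0 < x ->
  sinh (INR m * x) + sinh x < sinh (INR m.+1 * x).
Proof.
move/INR_ge1=> m_ge1 x_gt0.
have mx_gt0 : 0 < INR m * x by nra.
have := cosh_gt1 x_gt0; have := cosh_ge1 (Rlt_le _ _ mx_gt0).
have := sinh_gt0 x_gt0; have := sinh_gt0 mx_gt0.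
by rewrite S_INR Rmult_plus_distr_r Rmult_1_l sinh_add; nra.
Qed.

Lemma sinh_mul_gt n x : (2 <= n)%N -> 0 < x -> INR n * sinh x < sinh (INR n * x).
Proof.
move=> + x_gt0; elim: n => // m IHm m_ge1.
have := sinh_mul_succ_gt m_ge1 x_gt0; rewrite S_INR.
case: (ltnP 1 m) => [/IHm | m_le1]; first lra.
have -> : m = 1%N by apply/eqP; rewrite eqn_leq m_le1 -ltnS m_ge1.
by rewrite /= Rmult_1_l; lra.
Qed.

Lemma Dh_gt n x : (2 <= n)%N -> 0 < x -> INR n < Dh n x.
Proof.
move=> n_ge2 x_gt0; rewrite /Dh; case: (Req_EM_T x 0) => /= [|_]; first lra.
by apply/Rlt_div_r; [apply: sinh_gt0 | apply: sinh_mul_gt].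
Qed.

Section UnitriangularEigenvalues.

Import GRing.Theory.
Local Open Scope ring_scope.

Lemma unitrig_eigenvalues (F : idomainType) n (A : 'M[F]_n) (lam : nat -> F) :
  is_trig_mx A -> (forall i, A i i = 1) ->
  char_poly A = \prod_(k < n) ('X - (lam k)%:P) -> forall k, (k < n)%N -> lam k = 1.
Proof.
move=> A_trig A_diag char_A k k_lt_n.
have : (\prod_(i < n) ('X - (lam i)%:P)).[lam k] = 0.
  by rewrite horner_prod (bigD1 (Ordinal k_lt_n)) //= hornerXsubC subrr mul0r.
rewrite -char_A char_poly_trig // horner_prod => /eqP /prodf_eq0 [i _].
by rewrite hornerXsubC A_diag subr_eq0 => /eqP.
Qed.

End UnitriangularEigenvalues.

Lemma Kmat0_trig n : is_trig_mx (Kmat n 0).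
Proof.
apply/is_trig_mxP => i j lt_ij; rewrite mxE /distn (ltnW lt_ij).
have : (0 < j - i)%N by rewrite subn_gt0.
by case: (j - i)%N => // d _; rewrite /= Rmult_0_l.
Qed.

Lemma Kmat_diag n rho (i : 'I_n) : Kmat n rho i i = 1.
Proof. by rewrite mxE /distn leqnn subnn. Qed.

Lemma labeled_le1 n rho k lam : 0 <= rho <= 1 -> labeled n rho k lam ->
  exists mu, [/\ beta n k <= mu <= gamma n k,
    (if odd k then st n else ct n) mu = rho & lam = (-1) ^ k * Dt n mu].
Proof.
rewrite /labeled => rho_bds; case: k => [|[|k]] /=.
- case=> _ /(_ rho_bds) [mu [[mu_bds [root_mu _]] ->]]; exists mu.
  by rewrite /beta Rmult_0_l /Rdiv Rmult_0_l Rmult_1_l.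
- case=> _ [_ /(_ rho_bds) [mu [[mu_bds [root_mu _]] ->]]]; exists mu.
  by split => //; ring.
- by case=> _ /(_ rho_bds) [mu [[mu_bds [root_mu _]] ->]]; exists mu.
Qed.

Lemma labeled_ge1 n rho k lam : (2 <= k)%N -> 1 <= rho -> labeled n rho k lam ->
  exists mu, [/\ alpha n k < mu <= beta n k,
    (if odd k then st n else ct n) mu = rho & lam = (-1) ^ k * Dt n mu].
Proof.
rewrite /labeled; case: k => [|[|k]] //= _ rho_ge1.
by case=> /(_ rho_ge1) [mu [[mu_bds [root_mu _]] ->]] _; exists mu.
Qed.

Section LabeledEigenvalues.

Variables (n : nat) (rho : R) (lam : nat -> R).
Hypothesis n_ge2 : (2 <= n)%N.
Hypothesis lam_labeled : forall k, (k < n)%N -> labeled n rho k (lam k).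

Let n_gt1 : (1 < n)%N := n_ge2.
Let n_gt0 : (0 < n)%N := ltnW n_ge2.
Let INR_n_ge2 : 2 <= INR n := INR_ge2 n_ge2.
Let xi_n_gt1 : 1 < xi n := xi_gt1 n_ge2.

Lemma lam_sigma_le1 k : (k < n)%N -> 0 < rho <= 1 -> (1 <= k)%N \/ rho < 1 ->
  exists mu, [/\ beta n k <= mu <= gamma n k, 0 < mu < PI & lam k = sigma rho mu].
Proof.
move=> k_lt_n rho_bds k_or_rho.
have [|mu [mu_bds root_mu ->]] := labeled_le1 _ (lam_labeled k_lt_n); first lra.
have mu_gt0 : 0 < mu.
  case: (posnP k) => [k0 | /(beta_gt0 n_ge2)]; last lra.
  move: k_or_rho mu_bds root_mu; rewrite k0 /beta Rmult_0_l /Rdiv Rmult_0_l => -[//|rho_lt1].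
  by case=> /Rle_lt_or_eq_dec [//|<-] _ /=; rewrite ct_0; lra.
have := gamma_lt_PI n_ge2 k_lt_n => *.
by exists mu; split; [| lra | apply: Dt_sigma; lra].
Qed.

Lemma lam_sigma_gt1 k : (1 <= k < n)%N -> 1 < rho -> (2 <= k)%N \/ rho <= xi n ->
  exists mu, [/\ 0 <= mu <= beta n k, (2 <= k)%N -> alpha n k < mu,
    (2 <= k)%N \/ rho < xi n -> 0 < mu & lam k = sigma rho mu].
Proof.
case/andP=> k_ge1 k_lt_n rho_gt1 k_or_rho.
have := beta_lt_PI n_ge2 k_lt_n => beta_lt_PI.
case: (ltnP 1 k) => [k_ge2 | k_le1].
  have [//|mu [mu_bds root_mu ->]] := labeled_ge1 k_ge2 _ (lam_labeled k_lt_n); first lra.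
  have := alpha_gt0 n_ge2 k_ge2 => *.
  by exists mu; split=> [||_|]; try lra; apply: Dt_sigma; lra.
have k1 : k = 1%N by apply/eqP; rewrite eqn_leq k_le1 k_ge1.
move: k_or_rho beta_lt_PI; rewrite k1 => -[//|rho_le_xi] beta_lt_PI.
have := lam_labeled n_gt1; rewrite /labeled /=.
case=> _ [/(_ ltac:(lra)) [mu [[mu_bds [root_mu _]] ->]] _].
exists mu; split=> //; case: (Rle_lt_or_eq_dec 0 mu (proj1 mu_bds)) => [mu_gt0 | mu0].
- by move=> _; lra.
- by rewrite -mu0 st_0 in root_mu; case=> //; lra.
- by rewrite -(@Dt_sigma n 1 rho mu) //=; [ring | lra | lra].
- by rewrite -mu0 in root_mu *; rewrite Dt_0 -root_mu st_0 sigma_xi_0.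
Qed.

Lemma lam_decreasing_lt1 k : 0 < rho < 1 -> (k.+1 < n)%N -> lam k.+1 < lam k.
Proof.
move=> rho_bds k1_lt_n.
have [|mu [mu_bds mu_in ->]] := lam_sigma_le1 (ltnW k1_lt_n) _ (or_intror (proj2 rho_bds)).
  by lra.
have [|nu [nu_bds nu_in ->]] := lam_sigma_le1 k1_lt_n _ (or_intror (proj2 rho_bds)).
  by lra.
have := gamma_lt_beta_succ n_ge2 k => *.
by apply: sigma_decreasing; lra.
Qed.

Lemma lam_bounds_lt1 k : 0 < rho < 1 -> (k < n)%N ->
  (1 - rho) / (1 + rho) < lam k < (1 + rho) / (1 - rho).
Proof.
move=> rho_bds k_lt_n.
have [|mu [_ mu_in ->]] := lam_sigma_le1 k_lt_n _ (or_intror (proj2 rho_bds)); first lra.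
have := sigma_decreasing rho_bds (Rle_refl 0) (proj1 mu_in) (Rlt_le _ _ (proj2 mu_in)).
have := @sigma_decreasing rho mu PI rho_bds ltac:(lra) (proj2 mu_in) (Rle_refl _).
rewrite sigma_0 ?sigma_PI; try lra.
have -> : (1 + rho) / (1 - rho) = - ((rho + 1) / (rho - 1)) by field; lra.
have -> : (1 - rho) / (1 + rho) = - ((rho - 1) / (rho + 1)) by field; lra.
lra.
Qed.

Lemma lam_increasing_gt1 k : 1 < rho -> (1 <= k)%N -> (k.+1 < n)%N ->
  (2 <= k)%N \/ rho <= xi n -> lam k < lam k.+1.
Proof.
move=> rho_gt1 k_ge1 k1_lt_n k_or_rho.
have k_lt_n := ltnW k1_lt_n.
have [|mu [mu_bds _ _ ->]] := lam_sigma_gt1 _ rho_gt1 k_or_rho; first by rewrite k_ge1.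
have [|nu [nu_bds nu_gt _ ->]] := @lam_sigma_gt1 k.+1 _ rho_gt1 (or_introl k_ge1).
  by rewrite k1_lt_n.
have := nu_gt k_ge1; have := beta_lt_alpha_succ n_ge2 k_ge1.
have := beta_lt_PI n_ge2 k1_lt_n => *.
by apply: sigma_increasing; lra.
Qed.

Lemma lam_upper_gt1 k : 1 < rho -> (1 <= k < n)%N -> (2 <= k)%N \/ rho <= xi n ->
  lam k < - ((rho - 1) / (rho + 1)).
Proof.
move=> rho_gt1 k_bds k_or_rho.
have [mu [mu_bds _ _ ->]] := lam_sigma_gt1 k_bds rho_gt1 k_or_rho.
have := beta_lt_PI n_ge2 (proj2 (andP k_bds)) => *.
by rewrite -sigma_PI; [apply: sigma_increasing | ]; lra.
Qed.

Lemma lam_lower_gt1 k : 1 < rho -> (1 <= k < n)%N -> (2 <= k)%N \/ rho < xi n ->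
  - ((rho + 1) / (rho - 1)) < lam k.
Proof.
move=> rho_gt1 k_bds k_or_rho.
have [|mu [mu_bds _ mu_gt0 ->]] := lam_sigma_gt1 k_bds rho_gt1 _.
  by case: k_or_rho; [left | right; lra].
have := beta_lt_PI n_ge2 (proj2 (andP k_bds)) => *.
by rewrite -sigma_0; [apply: sigma_increasing | ]; try lra; apply: mu_gt0.
Qed.

Lemma lam_ordinary_gt1 k : 1 < rho -> (1 <= k < n)%N -> (2 <= k)%N \/ rho <= xi n ->
  ordinary rho (lam k).
Proof.
move=> rho_gt1 k_bds k_or_rho.
have [mu [mu_bds _ _ ->]] := lam_sigma_gt1 k_bds rho_gt1 k_or_rho.
have := beta_lt_PI n_ge2 (proj2 (andP k_bds)) => *.
by apply: ordinary_sigma; lra.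
Qed.

Lemma lam0_gt_n : 1 < rho -> INR n < lam 0.
Proof.
move=> rho_gt1; have := lam_labeled n_gt0; rewrite /labeled /=.
case=> /(_ ltac:(lra)) [x [[x_ge0 [root_x _]] ->]] _.
case: (Rle_lt_or_eq_dec _ _ x_ge0) => [|x0]; first exact: Dh_gt.
by rewrite -x0 ch_0 in root_x; lra.
Qed.

Lemma lam1_lt_opp_n : xi n < rho -> lam 1 < - INR n.
Proof.
move=> rho_gt_xi; have := lam_labeled n_gt1; rewrite /labeled /=.
case=> /(_ ltac:(lra)) [x [[x_ge0 [root_x _]] ->]] _.
case: (Rle_lt_or_eq_dec _ _ x_ge0) => [x_gt0 | x0].
- by have := Dh_gt n_ge2 x_gt0; lra.
- by rewrite -x0 sh_0 in root_x; lra.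
Qed.

Lemma lam0_rho1 : rho = 1 -> lam 0 = INR n.
Proof.
move=> rho1; have := lam_labeled n_gt0; rewrite /labeled /=.
case=> /(_ ltac:(lra)) [x [[_ [_ x_unique]] ->]] _.
by rewrite -(x_unique 0) ?Dh_0 ?ch_0 //; lra.
Qed.

Lemma lam1_xi : rho = xi n -> lam 1 = - INR n.
Proof.
move=> rho_xi; have beta1_gt0 := beta_gt0 n_ge2 (isT : (1 <= 1)%N).
have := lam_labeled n_gt1; rewrite /labeled /=.
case=> _ [/(_ ltac:(lra)) [mu [[_ [_ mu_unique]] ->]] _].
by rewrite -(mu_unique 0) ?Dt_0 ?st_0 //; lra.
Qed.

Lemma lam_rho1 k : rho = 1 -> (1 <= k < n)%N -> lam k = 0.
Proof.
move=> rho1 /andP[k_ge1 k_lt_n].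
have [|mu [_ _ ->]] := lam_sigma_le1 k_lt_n _ (or_introl k_ge1); first lra.
by rewrite sigmaE rho1 /Rdiv; ring.
Qed.

Lemma lam_ordinary_le1 : 0 <= rho <= 1 -> forall k, (k < n)%N -> ordinary rho (lam k).
Proof.
move=> rho_bds k k_lt_n.
case: (Rle_lt_or_eq_dec 0 rho (proj1 rho_bds)) => [rho_gt0 | <-]; last by left.
case: (Rle_lt_or_eq_dec rho 1 (proj2 rho_bds)) => [rho_lt1 | ->]; last by right; left.
have [|mu [_ mu_in ->]] := lam_sigma_le1 k_lt_n _ (or_intror rho_lt1); first lra.
by apply: ordinary_sigma; lra.
Qed.

Lemma lam_extraordinary_gt_xi : xi n < rho ->
  extraordinary rho (lam 0) /\ extraordinary rho (lam 1) /\
  forall k, (2 <= k < n)%N -> ordinary rho (lam k).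
Proof.
move=> rho_gt_xi; have rho_gt1 : 1 < rho by lra.
have lam0_gt := lam0_gt_n rho_gt1; have lam1_lt := lam1_lt_opp_n rho_gt_xi.
have opp_n_lt := opp_INR_lt_sigma_0 n_ge2 rho_gt_xi.
split; [|split].
- by move=> /(ordinary_gt1 rho_gt1); lra.
- by move=> /(ordinary_gt1 rho_gt1); lra.
- move=> k /andP[k_ge2 k_lt_n]; apply: lam_ordinary_gt1 => //; last by left.
  by rewrite k_lt_n (ltnW k_ge2).
Qed.

Lemma lam_extraordinary_between : 1 < rho <= xi n ->
  extraordinary rho (lam 0) /\ forall k, (1 <= k < n)%N -> ordinary rho (lam k).
Proof.
move=> rho_bds; have lam0_gt := lam0_gt_n (proj1 rho_bds).
split; first by move=> /(ordinary_gt1 (proj1 rho_bds)); lra.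
by move=> k k_bds; apply: lam_ordinary_gt1; [lra | | right; lra].
Qed.

Lemma lam_order_lt1 : 0 < rho < 1 ->
  0 < (1 - rho) / (1 + rho) /\ (1 - rho) / (1 + rho) < lam (n - 1) /\
  (forall k, (k.+1 < n)%N -> lam k.+1 < lam k) /\ lam 0 < (1 + rho) / (1 - rho).
Proof.
move=> rho_bds; split; first by apply: Rdiv_lt_0_compat; lra.
split; first by apply: (proj1 (lam_bounds_lt1 rho_bds _)); rewrite subn1 prednK.
split; first by move=> k; apply: lam_decreasing_lt1.
exact: (proj2 (lam_bounds_lt1 rho_bds n_gt0)).
Qed.

Lemma lam_order_eq1 : rho = 1 ->
  (forall k, (1 <= k < n)%N -> lam k = 0) /\ 0 < lam 0 /\ lam 0 = INR n.
Proof.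
move=> rho1; rewrite lam0_rho1 //.
by split; [move=> k; apply: lam_rho1 | split; lra].
Qed.

Lemma lam_order_between : 1 < rho < xi n ->
  - ((rho + 1) / (rho - 1)) < lam 1 /\
  (forall k, (1 <= k)%N -> (k.+1 < n)%N -> lam k < lam k.+1) /\
  lam (n - 1) < - ((rho - 1) / (rho + 1)) /\ - ((rho - 1) / (rho + 1)) < 0 /\
  0 < INR n /\ INR n < lam 0.
Proof.
move=> rho_bds.
have ratio_gt0 : 0 < (rho - 1) / (rho + 1) by apply: Rdiv_lt_0_compat; lra.
split; first by apply: lam_lower_gt1 => //; [lra | right; lra].
split; first by move=> k k_ge1 k1_lt_n; apply: lam_increasing_gt1 => //; [lra | right; lra].
split; last by split; [lra | split; [lra | apply: lam0_gt_n; lra]].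
apply: lam_upper_gt1; [lra | | right; lra].
by rewrite subn_gt0 n_gt1 subn1 ltn_predL.
Qed.

Lemma lam_order_xi : rho = xi n ->
  - INR n = lam 1 /\
  (forall k, (1 <= k)%N -> (k.+1 < n)%N -> lam k < lam k.+1) /\
  lam (n - 1) < - (1 / INR n) /\ - (1 / INR n) < 0 /\
  0 < INR n /\ INR n < lam 0.
Proof.
move=> rho_xi.
have inv_n_gt0 : 0 < 1 / INR n by apply: Rdiv_lt_0_compat; lra.
split; first by rewrite lam1_xi.
split; first by move=> k k_ge1 k1_lt_n; apply: lam_increasing_gt1 => //; [lra | right; lra].
split; last by split; [lra | split; [lra | apply: lam0_gt_n; lra]].
rewrite (_ : - (1 / INR n) = - ((rho - 1) / (rho + 1))); last by rewrite rho_xi /xi; field; lra.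
apply: lam_upper_gt1; [lra | | right; lra].
by rewrite subn_gt0 n_gt1 subn1 ltn_predL.
Qed.

Lemma lam_order_gt_xi : xi n < rho ->
  lam 1 < - INR n /\ - INR n < - ((rho + 1) / (rho - 1)) /\
  (forall k, (2 <= k < n)%N ->
     - ((rho + 1) / (rho - 1)) < lam k /\ lam k < - ((rho - 1) / (rho + 1))) /\
  (forall k, (2 <= k)%N -> (k.+1 < n)%N -> lam k < lam k.+1) /\
  - ((rho + 1) / (rho - 1)) < - ((rho - 1) / (rho + 1)) /\
  - ((rho - 1) / (rho + 1)) < 0 /\ 0 < INR n /\ INR n < lam 0.
Proof.
move=> rho_gt_xi; have rho_gt1 : 1 < rho by lra.
have := opp_INR_lt_sigma_0 n_ge2 rho_gt_xi; rewrite sigma_0; last lra.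
move=> opp_n_lt; have ratio_gt0 : 0 < (rho - 1) / (rho + 1) by apply: Rdiv_lt_0_compat; lra.
have ratio_lt1 : (rho - 1) / (rho + 1) < 1 by apply/Rlt_div_l; lra.
have inv_ratio_gt1 : 1 < (rho + 1) / (rho - 1) by apply/Rlt_div_r; lra.
split; first exact: lam1_lt_opp_n.
split; first lra.
split.
  move=> k /andP[k_ge2 k_lt_n]; have k_bds : (1 <= k < n)%N by rewrite k_lt_n ltnW.
  by split; [apply: lam_lower_gt1 | apply: lam_upper_gt1]; by [|left].
split; first by move=> k k_ge2 k1_lt_n; apply: lam_increasing_gt1 => //; [exact: ltnW | left].
by do 3![split; first lra]; exact: lam0_gt_n.
Qed.

End LabeledEigenvalues.

Theorem theorem6p6 (n : nat) (rho : R) (lam : nat -> R) :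
  (2 <= n)%N -> (0 <= rho)%R ->
  (* lam 0, ..., lam (n-1) are the eigenvalues of K_n(rho) (with multiplicity) *)
  char_poly (Kmat n rho) = (\prod_(k < n) ('X - (lam k)%:P))%R ->
  (* ... labeled as described in the context *)
  (forall k, (k < n)%N -> labeled n rho k (lam k)) ->
  ((* number of extraordinary eigenvalues *)
   (xi n < rho -> extraordinary rho (lam 0) /\ extraordinary rho (lam 1) /\
                  forall k, (2 <= k < n)%N -> ordinary rho (lam k)) /\
   (1 < rho <= xi n -> extraordinary rho (lam 0) /\
                  forall k, (1 <= k < n)%N -> ordinary rho (lam k)) /\
   (0 <= rho <= 1 -> forall k, (k < n)%N -> ordinary rho (lam k)))%R /\
  ((* orderings *)
   (rho = 0 -> forall k, (k < n)%N -> lam k = 1) /\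
   (0 < rho < 1 ->
      0 < (1 - rho) / (1 + rho) /\ (1 - rho) / (1 + rho) < lam (n - 1)%N /\
      (forall k, (k.+1 < n)%N -> lam k.+1 < lam k) /\
      lam 0%N < (1 + rho) / (1 - rho)) /\
   (rho = 1 -> (forall k, (1 <= k < n)%N -> lam k = 0) /\ 0 < lam 0%N /\ lam 0%N = INR n) /\
   (1 < rho < xi n ->
      - ((rho + 1) / (rho - 1)) < lam 1%N /\
      (forall k, (1 <= k)%N -> (k.+1 < n)%N -> lam k < lam k.+1) /\
      lam (n - 1)%N < - ((rho - 1) / (rho + 1)) /\ - ((rho - 1) / (rho + 1)) < 0 /\
      0 < INR n /\ INR n < lam 0%N) /\
   (rho = xi n ->
      - INR n = lam 1%N /\
      (forall k, (1 <= k)%N -> (k.+1 < n)%N -> lam k < lam k.+1) /\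
      lam (n - 1)%N < - (1 / INR n) /\ - (1 / INR n) < 0 /\
      0 < INR n /\ INR n < lam 0%N) /\
   (xi n < rho ->
      lam 1%N < - INR n /\ - INR n < - ((rho + 1) / (rho - 1)) /\
      (forall k, (2 <= k < n)%N ->
         - ((rho + 1) / (rho - 1)) < lam k /\ lam k < - ((rho - 1) / (rho + 1))) /\
      (forall k, (2 <= k)%N -> (k.+1 < n)%N -> lam k < lam k.+1) /\
      - ((rho + 1) / (rho - 1)) < - ((rho - 1) / (rho + 1)) /\
      - ((rho - 1) / (rho + 1)) < 0 /\ 0 < INR n /\ INR n < lam 0%N))%R.
Proof.
move=> n_ge2 _ char_K lam_labeled.
setoid_rewrite <- (rwP (andPP RltP RltP)).
setoid_rewrite <- (rwP (andPP RltP RleP)).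
setoid_rewrite <- (rwP (andPP RleP RleP)).
setoid_rewrite <- (rwP RltP).
split; [split; [|split] | split; [|split; [|split; [|split; [|split]]]]].
- exact: lam_extraordinary_gt_xi.
- exact: lam_extraordinary_between.
- exact: lam_ordinary_le1.
- move=> rho0; move: char_K; rewrite rho0 => char_K.
  exact: unitrig_eigenvalues (Kmat0_trig n) (@Kmat_diag n 0) char_K.
- exact: lam_order_lt1.
- exact: lam_order_eq1.
- exact: lam_order_between.
- exact: lam_order_xi.
- exact: lam_order_gt_xi.
Qed.
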